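(* Let $\mathcal{E}_{\mathrm{MUB}}$ be a set of $2^n+1$ unitaries on $(\mathbb{C}^2)^{\otimes n}$ such that the orthonormal bases $\{U^{\dagger}|\mathbf{b}\rangle:\mathbf{b}\in\{0,1\}^n\}$, $U\in\mathcal{E}_{\mathrm{MUB}}$, form a complete set of mutually unbiased bases. Let $O$ be a Hermitian observable and $O_0=O-\operatorname{tr}(O)\mathbb{I}/2^n$. Then $$\|O_0\|^2_{\mathrm{s},\mathcal{E}_{\mathrm{MUB}}}\le(2^n+1)\operatorname{tr}(O_0^2),\qquad \|O_0\|^2_{\mathrm{ls},\mathcal{E}_{\mathrm{MUB}}}=\frac{2^n+1}{2^n}\operatorname{tr}(O_0^2).$$
   Context: Bases $\{|e_k\rangle\}$ and $\{|f_l\rangle\}$ of $\mathbb{C}^{2^n}$ are mutually unbiased if $|\langle e_k|f_l\rangle|^2=2^{-n}$ for all $k,l$; a complete set consists of $2^n+1$ pairwise mutually unbiased bases. Shadow estimation with ensemble $\mathcal{E}$: given a state $\rho$, pick $U\in\mathcal{E}$ uniformly at random, measure $U\rho U^{\dagger}$ in the computational basis, obtaining $\mathbf{b}$ with probability $\langle\mathbf{b}|U\rho U^{\dagger}|\mathbf{b}\rangle$, and form the snapshot $\hat\rho=\mathcal{M}_{Cl}^{-1}(U^{\dagger}|\mathbf{b}\rangle\langle\mathbf{b}|U)$ where $\mathcal{M}_{Cl}^{-1}(A)=(2^n+1)A-\operatorname{tr}(A)\mathbb{I}$. The shadow norm is $\|O_0\|^2_{\mathrm{s},\mathcal{E}}=\max_{\rho}\mathbb{E}_{U,\mathbf{b}}[\operatorname{tr}(O_0\hat\rho)^2]$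 (maximum over density operators $\rho$), and the locally-scrambled shadow norm $\|O_0\|^2_{\mathrm{ls},\mathcal{E}}$ is the same expectation evaluated at $\rho=\mathbb{I}/2^n$. *)

(* complex numbers are R[i] (mathcomp-real-closed) over
   R : realType (mathcomp-reals, so that the supremum `sup` is available). *)
From HB Require Import structures.
From mathcomp Require Import all_boot all_order all_algebra.
From mathcomp Require Import spectral.
From mathcomp Require Import complex.
From mathcomp Require Import classical_sets reals.

Set Implicit Arguments.
Unset Strict Implicit.
Unset Printing Implicit Defensive.

Import Order.TTheory GRing.Theory Num.Theory.
Local Open Scope ring_scope.
Local Open Scope sesquilinear_scope.

Section Shadow.
Variable R : realType.
Local Notation C := R[i].
Variable n : nat.
(* Hilbert space dimension 2^n; computational basis |b>, b in {0,1}^n,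
   indexed by 'I_(2^n). *)
Local Notation d := (2 ^ n)%N.

Definition is_hermitian_op (A : 'M[C]_d) : Prop := A ^t* = A.

(* positive semidefinite: <v|A|v> >= 0 for every vector v
   (order on C: nonnegative real) *)
Definition is_psd_op (A : 'M[C]_d) : Prop :=
  forall v : 'cV[C]_d, 0 <= (v ^t* *m A *m v) 0 0.

Definition density (rho : 'M[C]_d) : Prop :=
  is_hermitian_op rho /\ is_psd_op rho /\ \tr rho = 1.

(* Ensemble of 2^n+1 unitaries, indexed by 'I_(2^n).+1, such that the bases
   {U_k^dagger |b>}_b are pairwise mutually unbiased:
   |<U_k^dag b | U_l^dag b'>|^2 = |(U_k U_l^dag)_{b b'}|^2 = 2^-n. *)
Definition MUB_ensemble (U : 'I_d.+1 -> 'M[C]_d) : Prop :=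
  (forall k, U k \is unitarymx) /\
  (forall k l : 'I_d.+1, k != l -> forall b b' : 'I_d,
     `|(U k *m (U l) ^t*) b b'| ^+ 2 = (d%:R)^-1).

(* inverse Clifford measurement channel M_Cl^{-1}(A) = (2^n+1) A - tr(A) I *)
Definition MCl_inv (A : 'M[C]_d) : 'M[C]_d :=
  (d.+1)%:R *: A - (\tr A)%:M.

Definition snapshot (U : 'I_d.+1 -> 'M[C]_d) (k : 'I_d.+1) (b : 'I_d) :
  'M[C]_d := MCl_inv ((U k) ^t* *m delta_mx b b *m U k).

Definition outcome_prob (U : 'I_d.+1 -> 'M[C]_d) (rho : 'M[C]_d)
  (k : 'I_d.+1) (b : 'I_d) : C := (U k *m rho *m (U k) ^t*) b b.

(* E_{U,b}[ tr(O0 rho_hat)^2 ], U uniform over the ensemble *)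
Definition shadow_expect (U : 'I_d.+1 -> 'M[C]_d) (O0 rho : 'M[C]_d) : C :=
  (d.+1)%:R^-1 * \sum_(k < d.+1) \sum_(b < d)
     outcome_prob U rho k b * (\tr (O0 *m snapshot U k b)) ^+ 2.

(* shadow norm squared: maximum (supremum) over density operators; the
   expectations are real for Hermitian O0 and density rho, so we take the
   real part to land in R. *)
Definition shadow_norm_sq (U : 'I_d.+1 -> 'M[C]_d) (O0 : 'M[C]_d) : R :=
  sup [set x : R | exists rho, density rho /\ x = complex.Re (shadow_expect U O0 rho)].

Definition ls_shadow_norm_sq (U : 'I_d.+1 -> 'M[C]_d) (O0 : 'M[C]_d) : C :=
  shadow_expect U O0 ((d%:R)^-1 *: 1%:M).

End Shadow.

(* The projectors P k b = U_k^dagger |b><b| U_k of a complete set of m + 1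
   mutually unbiased bases form a 2-design:
   sum_(k,b) tr(P k b A) P k b = A + tr(A) I.  The defect
   D(A) = A + tr(A) I - sum_(k,b) tr(P k b A) P k b kills every P k b, hence I
   and the range of the frame operator, so D is idempotent; it is self-adjoint
   for the Hilbert-Schmidt product, and since tr(P k b P l b') is known for all
   pairs, its trace as a map on m x m matrices is m^2 + m - (m + 1) m = 0.  An
   orthogonal projection of trace zero vanishes.
   For traceless O this gives tr(O^2) = sum_(k,b) x_kb^2 with x_kb = tr(P k b O),
   while tr(O rho_hat) = (m + 1) x_kb for the snapshot of outcome (k, b).  So
   the shadow expectation is (m + 1) sum_(k,b) p_kb x_kb^2: bounding p_kb <= 1
   gives the shadow norm bound, and p_kb = 1/m at rho = I/m gives the locally
   scrambled one. *)

From HB Require Import structures.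
From mathcomp Require Import all_boot all_order all_algebra.
From mathcomp Require Import spectral.
From mathcomp Require Import complex.
From mathcomp Require Import classical_sets reals.
Import Order.TTheory GRing.Theory Num.Theory.
Local Open Scope ring_scope.
Local Open Scope sesquilinear_scope.

Lemma psumr2_eq0 {R : numDomainType} {I J : finType} {F : I -> J -> R} :
  (forall i j, 0 <= F i j) -> \sum_i \sum_j F i j = 0 -> forall i j, F i j = 0.
Proof.
move=> F_ge0 sum0 i j.
have row_ge0 i' : 0 <= \sum_j' F i' j' by apply: sumr_ge0.
have row0 : \sum_j' F i j' = 0 by apply: (psumr_eq0P (fun i' _ => row_ge0 i') sum0).
by apply: (psumr_eq0P (fun j' _ => F_ge0 i j') row0).
Qed.

Section ConjugateTranspose.
Context {C : numClosedFieldType}.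

Lemma trmxC_mul p q r (A : 'M[C]_(p, q)) (B : 'M[C]_(q, r)) :
  (A *m B)^t* = B^t* *m A^t*.
Proof. by rewrite trmx_mul map_mxM. Qed.

Lemma trmxCB p q (A B : 'M[C]_(p, q)) : (A - B)^t* = A^t* - B^t*.
Proof. by rewrite raddfB map_mxB. Qed.

Lemma trmxCZ p q a (A : 'M[C]_(p, q)) : (a *: A)^t* = a^* *: A^t*.
Proof. by rewrite linearZ map_mxZ. Qed.

Lemma trmxC_scalar p (a : C) : (a%:M : 'M[C]_p)^t* = (a^*)%:M.
Proof. by rewrite tr_scalar_mx map_scalar_mx. Qed.

Lemma trmxC_delta p q (i : 'I_p) (j : 'I_q) :
  (delta_mx i j : 'M[C]_(p, q))^t* = delta_mx j i.
Proof. by rewrite trmx_delta map_delta_mx. Qed.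

Lemma mxtrace_trmxC p (A : 'M[C]_p) : \tr (A^t*) = (\tr A)^*.
Proof. by rewrite trace_map_mx mxtrace_tr. Qed.

Lemma delta_mulmx_delta p q (M : 'M[C]_(p, q)) i j :
  (delta_mx 0 i *m M *m delta_mx j 0 : 'M_1) 0 0 = M i j.
Proof. by rewrite -rowE -colE !mxE. Qed.

Lemma mxtrace_mul_delta p q (A : 'M[C]_(p, q)) i j :
  \tr (A *m delta_mx i j) = A j i.
Proof.
rewrite -(mul_delta_mx (0 : 'I_1)) mulmxA mxtrace_mulC mulmxA.
by rewrite trace_mx11 delta_mulmx_delta.
Qed.

Lemma mul_delta_trmxC_diag p q (W : 'M[C]_(p, q)) i j :
  (W *m delta_mx j j *m W^t*) i i = `|W i j| ^+ 2.
Proof.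
rewrite -(mul_delta_mx (0 : 'I_1)) mulmxA -colE -mulmxA -rowE mxE big_ord1.
by rewrite !mxE normCK.
Qed.

End ConjugateTranspose.

Section HilbertSchmidt.
Context {C : numClosedFieldType} {p q : nat}.
Implicit Types (X Y : 'M[C]_(p, q)) (f g : 'M[C]_(p, q) -> 'M[C]_(p, q)).

Definition hsdot X Y : C := \tr (X^t* *m Y).

Lemma hsdot_conj X Y : hsdot X Y = (hsdot Y X)^*.
Proof. by rewrite /hsdot -mxtrace_trmxC trmxC_mul trmxCK. Qed.

Lemma hsdot_delta_l i j Y : hsdot (delta_mx i j) Y = Y i j.
Proof. by rewrite /hsdot trmxC_delta mxtrace_mulC mxtrace_mul_delta. Qed.

Lemma hsdot_selfE X : hsdot X X = \sum_i \sum_j `|X i j| ^+ 2.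
Proof.
rewrite /hsdot exchange_big; apply: eq_bigr => j _; rewrite mxE.
by apply: eq_bigr => i _; rewrite !mxE normCKC.
Qed.

Lemma hsdot_self_ge0 X : 0 <= hsdot X X.
Proof.
rewrite hsdot_selfE; apply: sumr_ge0 => i _.
by apply: sumr_ge0 => j _; rewrite exprn_ge0.
Qed.

Lemma hsdot_self_eq0 X : hsdot X X = 0 -> X = 0.
Proof.
rewrite hsdot_selfE => /(psumr2_eq0 (fun i j => exprn_ge0 2 (normr_ge0 (X i j)))).
move=> X0; apply/matrixP => i j; rewrite mxE.
by apply/eqP; rewrite -normr_eq0 -sqrf_eq0 X0.
Qed.

Definition mxlin_trace f : C := \sum_i \sum_j f (delta_mx i j) i j.

Lemma eq_mxlin_trace {f g} : f =1 g -> mxlin_trace f = mxlin_trace g.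
Proof. by move=> fg; apply: eq_bigr => i _; apply: eq_bigr => j _; rewrite fg. Qed.

Lemma mxlin_traceD f g :
  mxlin_trace (fun X => f X + g X) = mxlin_trace f + mxlin_trace g.
Proof.
rewrite -big_split; apply: eq_bigr => i _.
by rewrite -big_split; apply: eq_bigr => j _; rewrite mxE.
Qed.

Lemma mxlin_traceB f g :
  mxlin_trace (fun X => f X - g X) = mxlin_trace f - mxlin_trace g.
Proof.
rewrite -sumrB; apply: eq_bigr => i _.
by rewrite -sumrB; apply: eq_bigr => j _; rewrite !mxE.
Qed.

Lemma mxlin_trace_sum (I : Type) (r : seq I) (P : pred I) F :
  mxlin_trace (fun X => \sum_(k <- r | P k) F k X) =
  \sum_(k <- r | P k) mxlin_trace (F k).
Proof.
rewrite /mxlin_trace; under eq_bigr do under eq_bigr do rewrite summxE.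
by under eq_bigr do rewrite exchange_big; rewrite exchange_big.
Qed.

Lemma mxlin_trace_id : mxlin_trace id = (p * q)%:R.
Proof.
rewrite /mxlin_trace -[p in RHS]card_ord -[q in RHS]card_ord natrM mulr_natl.
rewrite -sumr_const; apply: eq_bigr => i _; rewrite -sumr_const.
by apply: eq_bigr => j _; rewrite mxE !eqxx.
Qed.

Lemma mxlin_trace_rank1 (A : 'M[C]_(q, p)) (B : 'M[C]_(p, q)) :
  mxlin_trace (fun X => \tr (A *m X) *: B) = \tr (A *m B).
Proof.
rewrite /mxlin_trace /mxtrace; under [RHS]eq_bigr do rewrite mxE.
rewrite [RHS]exchange_big; apply: eq_bigr => i _; apply: eq_bigr => j _.
by rewrite mxE -/(mxtrace _) mxtrace_mul_delta.
Qed.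

(* The squared norms of the images of the matrix units add up to the trace. *)
Lemma orthoprojector_trace0_eq0 (f : {linear 'M[C]_(p, q) -> 'M[C]_(p, q)}) :
  (forall X Y, hsdot (f X) Y = hsdot X (f Y)) -> (forall X, f (f X) = f X) ->
  mxlin_trace f = 0 -> forall X, f X = 0.
Proof.
move=> f_selfadj f_idem f_tr0 X.
have f_delta i j : f (delta_mx i j) = 0.
  apply: hsdot_self_eq0; move: i j; apply: psumr2_eq0 => [i j|].
    exact: hsdot_self_ge0.
  under eq_bigr do under eq_bigr do rewrite f_selfadj f_idem hsdot_delta_l.
  exact: f_tr0.
rewrite [X]matrix_sum_delta linear_sum big1 // => i _.
by rewrite linear_sum big1 // => j _; rewrite linearZ /= f_delta scaler0.
Qed.

End HilbertSchmidt.

Section MutuallyUnbiasedBases.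
Context {C : numClosedFieldType} {m : nat}.
Hypothesis m_gt0 : (0 < m)%N.
Variable U : 'I_m.+1 -> 'M[C]_m.
Hypothesis U_unitary : forall k, U k \is unitarymx.
Hypothesis U_unbiased : forall k l, k != l -> forall b b' : 'I_m,
  `|(U k *m (U l)^t*) b b'| ^+ 2 = m%:R^-1.

Definition mub_proj k b : 'M[C]_m := (U k)^t* *m delta_mx b b *m U k.
Local Notation P := mub_proj.

Lemma mub_proj_trmxC k b : (P k b)^t* = P k b.
Proof. by rewrite /P !trmxC_mul trmxCK trmxC_delta mulmxA. Qed.

Lemma mxtrace_mub_proj_mul k b A :
  \tr (P k b *m A) = (U k *m A *m (U k)^t*) b b.
Proof.
by rewrite /P -!mulmxA mxtrace_mulC -!mulmxA mxtrace_mulC mxtrace_mul_delta !mulmxA.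
Qed.

Lemma mxtrace_mub_proj k b : \tr (P k b) = 1.
Proof.
by rewrite -[P k b]mulmx1 mxtrace_mub_proj_mul mulmx1 (unitarymxP _) ?mxE ?eqxx.
Qed.

Lemma mxtrace_mub_proj_pair k l b b' :
  \tr (P k b *m P l b') = if k == l then (b == b')%:R else m%:R^-1.
Proof.
rewrite mxtrace_mub_proj_mul /P !mulmxA -(mulmxA _ (U l)).
have -> : U l *m (U k)^t* = (U k *m (U l)^t*)^t* by rewrite trmxC_mul trmxCK.
case: eqP => [<-|/eqP kl].
  by rewrite (unitarymxP _) // trmxC_scalar conjC1 mulmx1 mul1mx mxE andbb.
by rewrite mul_delta_trmxC_diag U_unbiased.
Qed.

Lemma sum_mub_proj k : \sum_b P k b = 1%:M.
Proof.
rewrite /P -mulmx_suml -mulmx_sumr.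
have -> : \sum_(b < m) (delta_mx b b : 'M[C]_m) = 1%:M.
  apply/matrixP => i j; rewrite summxE (bigD1 i) //= big1 => [|b bi].
    by rewrite !mxE eqxx addr0 eq_sym.
  by rewrite mxE eq_sym (negbTE bi).
by rewrite mulmx1 -[_ *m _]mul1mx mulmxA mulmxKtV.
Qed.

Definition mub_frame (A : 'M[C]_m) : 'M[C]_m :=
  \sum_k \sum_b \tr (P k b *m A) *: P k b.

Fact mub_frame_is_linear : linear mub_frame.
Proof.
move=> a A B; rewrite /mub_frame scaler_sumr -big_split; apply: eq_bigr => k _.
rewrite scaler_sumr -big_split; apply: eq_bigr => b _ /=.
by rewrite mulmxDr -scalemxAr linearD linearZ /= scalerDl scalerA.
Qed.

HB.instance Definition _ :=
  GRing.isLinear.Build C 'M[C]_m 'M[C]_m _ mub_frame mub_frame_is_linear.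

Lemma mub_frame_proj l b' : mub_frame (P l b') = P l b' + 1%:M.
Proof.
rewrite /mub_frame (bigD1 l) //=; congr (_ + _).
  under eq_bigr => b _ do rewrite mxtrace_mub_proj_pair eqxx.
  rewrite (bigD1 b') //= eqxx scale1r big1 ?addr0 // => b bb'.
  by rewrite (negbTE bb') scale0r.
under eq_bigr => k kl.
  under eq_bigr => b _ do rewrite mxtrace_mub_proj_pair (negbTE kl).
  rewrite -scaler_sumr sum_mub_proj.
  over.
rewrite sumr_const cardC1 card_ord -scaler_nat scalerA mulfV ?scale1r //.
by rewrite pnatr_eq0 -lt0n.
Qed.

Definition mub_defect (A : 'M[C]_m) : 'M[C]_m := A + (\tr A)%:M - mub_frame A.

Fact mub_defect_is_linear : linear mub_defect.
Proof.
move=> a A B; rewrite /mub_defect !linearP /= raddfD /= -scale_scalar_mx.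
by rewrite !scalerDr (addrACA (a *: A)) [LHS]addrACA.
Qed.

HB.instance Definition _ :=
  GRing.isLinear.Build C 'M[C]_m 'M[C]_m _ mub_defect mub_defect_is_linear.

Lemma mub_defect_proj k b : mub_defect (P k b) = 0.
Proof. by rewrite /mub_defect mub_frame_proj mxtrace_mub_proj subrr. Qed.

Lemma mub_defect_frame A : mub_defect (mub_frame A) = 0.
Proof.
rewrite /mub_frame !linear_sum big1 // => k _.
by rewrite linear_sum big1 // => b _; rewrite linearZ /= mub_defect_proj scaler0.
Qed.

Lemma mub_defect_idem A : mub_defect (mub_defect A) = mub_defect A.
Proof.
have defect1 : mub_defect 1%:M = 0.
  by rewrite -(sum_mub_proj ord0) linear_sum big1 // => b _; apply: mub_defect_proj.
have -> : mub_defect (mub_defect A) =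
    mub_defect A + \tr A *: mub_defect 1%:M - mub_defect (mub_frame A).
  rewrite [X in mub_defect X]/mub_defect -[(\tr A)%:M]scalemx1.
  by rewrite linearB linearD linearZ.
by rewrite defect1 mub_defect_frame scaler0 addr0 subr0.
Qed.

Lemma hsdot_mub_proj X k b : hsdot X (P k b) = (\tr (P k b *m X))^*.
Proof. by rewrite /hsdot -{1}mub_proj_trmxC -trmxC_mul mxtrace_trmxC. Qed.

Lemma hsdot_mub_defect X Y :
  hsdot X (mub_defect Y) = hsdot X Y + \tr Y * (\tr X)^* -
    \sum_k \sum_b \tr (P k b *m Y) * (\tr (P k b *m X))^*.
Proof.
rewrite {1}/hsdot /mub_defect /mub_frame mulmxBr mulmxDr linearB linearD /=.
rewrite mul_mx_scalar linearZ /= mxtrace_trmxC mulmx_sumr linear_sum.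
congr (_ + _ - _); apply: eq_bigr => k _ /=.
rewrite mulmx_sumr linear_sum; apply: eq_bigr => b _ /=.
by rewrite -scalemxAr linearZ /= -/(hsdot X _) hsdot_mub_proj.
Qed.

Lemma mub_defect_selfadj X Y : hsdot (mub_defect X) Y = hsdot X (mub_defect Y).
Proof.
rewrite hsdot_conj !hsdot_mub_defect !rmorphB !rmorphD /= -hsdot_conj.
rewrite rmorphM /= conjCK mulrC; congr (_ + _ - _).
rewrite rmorph_sum; apply: eq_bigr => k _; rewrite rmorph_sum; apply: eq_bigr => b _.
by rewrite rmorphM /= conjCK mulrC.
Qed.

Lemma mxlin_trace_mub_defect : mxlin_trace mub_defect = 0.
Proof.
have defectE : mub_defect =1 (fun X =>
    X + \tr (1%:M *m X) *: 1%:M - \sum_k \sum_b \tr (P k b *m X) *: P k b).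
  by move=> X; rewrite /mub_defect mul1mx scalemx1.
rewrite (eq_mxlin_trace defectE) mxlin_traceB mxlin_traceD mxlin_trace_id.
rewrite mxlin_trace_rank1 mxlin_trace_sum.
under eq_bigr do rewrite mxlin_trace_sum.
under eq_bigr do under eq_bigr do
  rewrite mxlin_trace_rank1 mxtrace_mub_proj_pair !eqxx.
rewrite mul1mx mxtrace1 !sumr_const !card_ord.
by rewrite -mulrnA -natrD /= mulr1n mulnSr subrr.
Qed.

Theorem mub_frameE A : mub_frame A = A + (\tr A)%:M.
Proof.
apply/esym/eqP; rewrite -subr_eq0; apply/eqP.
exact: (orthoprojector_trace0_eq0 mub_defect mub_defect_selfadj mub_defect_idem
  mxlin_trace_mub_defect).
Qed.

Lemma mxtrace_sqr_mub A :
  \tr A = 0 -> \tr (A *m A) = \sum_k \sum_b \tr (P k b *m A) ^+ 2.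
Proof.
move=> trA0; have frameA : mub_frame A = A by rewrite mub_frameE trA0 raddf0 addr0.
rewrite -{1}frameA /mub_frame !mulmx_suml linear_sum; apply: eq_bigr => k _ /=.
rewrite mulmx_suml linear_sum; apply: eq_bigr => b _ /=.
by rewrite -scalemxAl linearZ /= expr2.
Qed.

End MutuallyUnbiasedBases.

Section ShadowNorm.
Context {R : realType} {n : nat}.
Local Notation d := (2 ^ n)%N.
Variable U : 'I_d.+1 -> 'M[R[i]]_d.
Hypothesis U_mub : MUB_ensemble U.
Variable O0 : 'M[R[i]]_d.
Hypothesis O0_traceless : \tr O0 = 0.
Hypothesis O0_hermitian : is_hermitian_op O0.

Local Notation P := (mub_proj U).

Let d_gt0 : (0 < d)%N. Proof. by rewrite expn_gt0. Qed.
Let U_unitary : forall k, U k \is unitarymx. Proof. by case: U_mub. Qed.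

Let mxtrace_sqr_O0 :
  \tr (O0 *m O0) = \sum_k \sum_b \tr (P k b *m O0) ^+ 2.
Proof. exact: mxtrace_sqr_mub d_gt0 _ U_unitary (proj2 U_mub) _ O0_traceless. Qed.

Lemma mxtrace_mul_snapshot k b :
  \tr (O0 *m snapshot U k b) = d.+1%:R * \tr (P k b *m O0).
Proof.
rewrite /snapshot /MCl_inv mulmxBr linearB -scalemxAr !linearZ /= mul_mx_scalar.
by rewrite linearZ /= O0_traceless mulr0 subr0 mxtrace_mulC.
Qed.

Lemma shadow_expectE rho : shadow_expect U O0 rho =
  d.+1%:R * \sum_k \sum_b outcome_prob U rho k b * \tr (P k b *m O0) ^+ 2.
Proof.
rewrite /shadow_expect.
under eq_bigr do under eq_bigr do rewrite mxtrace_mul_snapshot exprMn mulrCA.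
under eq_bigr do rewrite -mulr_sumr.
by rewrite -mulr_sumr expr2 mulrA mulKf // pnatr_eq0.
Qed.

Lemma ls_shadow_norm_sqE :
  ls_shadow_norm_sq U O0 = d.+1%:R / d%:R * \tr (O0 *m O0).
Proof.
rewrite /ls_shadow_norm_sq shadow_expectE mxtrace_sqr_O0.
rewrite -mulrA [in RHS]mulr_sumr; congr (_ * _); apply: eq_bigr => k _.
rewrite [in RHS]mulr_sumr; apply: eq_bigr => b _.
rewrite /outcome_prob -scalemxAr mulmx1 -scalemxAl (unitarymxP _) //.
by rewrite !mxE eqxx mulr1.
Qed.

Lemma outcome_prob_ge0 rho k b : is_psd_op rho -> 0 <= outcome_prob U rho k b.
Proof.
move/(_ ((U k)^t* *m delta_mx b 0)).
rewrite trmxC_mul trmxCK trmxC_delta !mulmxA.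
by rewrite -(mulmxA _ (U k)) -(mulmxA _ (U k *m rho)) delta_mulmx_delta.
Qed.

Lemma sum_outcome_prob rho k : \tr rho = 1 -> \sum_b outcome_prob U rho k b = 1.
Proof.
move=> <-; rewrite -[LHS]/(\tr _) mxtrace_mulC mulmxA.
by rewrite -[_^t*]mul1mx mulmxKtV ?mul1mx.
Qed.

Lemma outcome_prob_le1 rho k b : density rho -> outcome_prob U rho k b <= 1.
Proof.
move=> [_ [rho_psd tr_rho]]; rewrite -(sum_outcome_prob _ k tr_rho) (bigD1 b) //=.
by rewrite lerDl sumr_ge0 // => b' _; apply: outcome_prob_ge0.
Qed.

Lemma sqr_mxtrace_mub_proj_ge0 k b : 0 <= \tr (P k b *m O0) ^+ 2.
Proof.
have real_tr : (\tr (P k b *m O0))^* = \tr (P k b *m O0).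
  by rewrite -mxtrace_trmxC trmxC_mul O0_hermitian mub_proj_trmxC mxtrace_mulC.
by rewrite expr2 -{2}real_tr mul_conjC_ge0.
Qed.

Lemma shadow_expect_le rho : density rho ->
  shadow_expect U O0 rho <= d.+1%:R * \tr (O0 *m O0).
Proof.
move=> rho_density; rewrite shadow_expectE mxtrace_sqr_O0 ler_wpM2l ?ler0n //.
apply: ler_sum => k _; apply: ler_sum => b _.
by rewrite ler_piMl ?sqr_mxtrace_mub_proj_ge0 ?outcome_prob_le1.
Qed.

Lemma density_maximally_mixed : density (d%:R^-1 *: 1%:M : 'M[R[i]]_d).
Proof.
split; [|split].
- by rewrite /is_hermitian_op trmxCZ trmxC_scalar conjC1 fmorphV /= conjC_nat.
- move=> v; rewrite -scalemxAr mulmx1 -scalemxAl mxE mulr_ge0 ?invr_ge0 ?ler0n //.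
  by rewrite mxE sumr_ge0 // => i _; rewrite !mxE mulrC mul_conjC_ge0.
- by rewrite mxtraceZ mxtrace1 mulVf // pnatr_eq0 -lt0n.
Qed.

Lemma shadow_norm_sq_le :
  (shadow_norm_sq U O0)%:C%C <= d.+1%:R * \tr (O0 *m O0).
Proof.
have bound_ge0 : 0 <= d.+1%:R * \tr (O0 *m O0).
  rewrite mulr_ge0 ?ler0n // mxtrace_sqr_O0.
  by do 2!(apply: sumr_ge0 => ? _); apply: sqr_mxtrace_mub_proj_ge0.
move: bound_ge0; rewrite !lecE /= => /andP[/eqP -> _]; rewrite eqxx /=.
apply: ge_sup.
  by exists (complex.Re (shadow_expect U O0 (d%:R^-1 *: 1%:M)));
    exists (d%:R^-1 *: 1%:M); split => //; exact: density_maximally_mixed.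
move=> _ [rho [rho_density ->]].
by have := shadow_expect_le _ rho_density; rewrite lecE => /andP[_ ->].
Qed.

End ShadowNorm.

Theorem theorem1 (R : realType) (n : nat)
  (U : 'I_(2 ^ n).+1 -> 'M[R[i]]_(2 ^ n)) (Obs : 'M[R[i]]_(2 ^ n)) :
  MUB_ensemble U -> is_hermitian_op Obs ->
  let O0 := Obs - (\tr Obs / (2 ^ n)%N%:R)%:M in
  ((shadow_norm_sq U O0)%:C%C <= ((2 ^ n).+1)%N%:R * \tr (O0 *m O0)) /\
  ls_shadow_norm_sq U O0 = ((2 ^ n).+1)%N%:R / (2 ^ n)%N%:R * \tr (O0 *m O0).
Proof.
move=> U_mub Obs_hermitian O0.
have d_neq0 : (2 ^ n)%N%:R != 0 :> R[i] by rewrite pnatr_eq0 expn_eq0.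
have O0_traceless : \tr O0 = 0.
  by rewrite /O0 linearB /= mxtrace_scalar -[X in _ - X]mulr_natr divfK ?subrr.
have O0_hermitian : is_hermitian_op O0.
  rewrite /is_hermitian_op /O0 trmxCB trmxC_scalar Obs_hermitian.
  by rewrite rmorphM /= fmorphV /= conjC_nat -mxtrace_trmxC Obs_hermitian.
split; first exact: shadow_norm_sq_le U_mub _ O0_traceless O0_hermitian.
exact: ls_shadow_norm_sqE U_mub _ O0_traceless.
Qed.
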